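(* Let $G = \mathbb{Z}_9$, $k = 3$ and $N = \langle 3\rangle = \{0,3,6\}$. Then $|G| = k^2$, $N\le G$ with $|N|=k$, the sum of the elements of $N$ is $0$, and the sum of the elements of $G/N$ is the identity coset $N$, yet $\exp(G)=9$ does not divide $k$ and $G$ has no pandiagonal magic Cayley-sudoku table. Also, for $G=\mathbb{Z}_2\times\mathbb{Z}_2$, $k=2$ and any subgroup $N$ of order $2$, we have $|G|=k^2$ and $\exp(G)$ divides $k$, but $G$ has no pandiagonal magic Cayley-sudoku table. Consequently, in Theorem 4.1 the hypothesis that $\exp(G)$ divides $k$ cannot be omitted, and hypotheses (3) (product of elements of $N$ is $1$) and (4) (product of elements of $G/N$ is $N$) cannot both be omitted.
   Context: Theorem 4.1 states: if $G$ is a finite abelian group with $|G|=k^2$, $\exp(G)$ dividing $k$, $N\le G$ with $|N|=k$, (3) the product of all elements of $N$ is the identity, and (4) the product of all elements of $G/N$ is the identity coset $N$, then $G$ has a pandiagonal magic Cayley-sudoku table. A Cayley table of $G$ is a square array with rows and columns each labeled by a listing of all elements of $G$, entry in row $r$, column $c$ being $r+c$. A Cayley-sudoku table is a Cayley table whose body is partitioned into uniformly sized rectangular blocks (consecutive rows and columns) each containing every element exactly once. It is pandiagonal magic if the blocks are square and every row (left to right), column, broken diagonal and broken antidiagonal (top to bottom) sum of each block is the identity; broken diagonals of a $k\times k$ array are the entries at positions $(\ell,\ell+j)$, broken antidiagonals those at $(\ell,j-\ell)$, $\ell=1,\dots,k$, indices mod $k$. *)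

From mathcomp Require Import all_boot all_fingroup all_algebra all_solvable.
Set Implicit Arguments.
Unset Strict Implicit.
Unset Printing Implicit Defensive.

Local Open Scope group_scope.

Section CayleySudoku.
Variable gT : finGroupType.

(* Entry of the Cayley table with row labels [rs] and column labels [cs]
   (0-based positions); the group operation is written multiplicatively
   (for the additive groups 'Z_n the finGroupType product is addition). *)
Definition ct_entry (rs cs : seq gT) (i j : nat) : gT :=
  nth 1 rs i * nth 1 cs j.

Definition listing (G : {set gT}) (rs : seq gT) : Prop :=
  perm_eq rs (enum G).

Definition cayley_sudoku (G : {set gT}) (rs cs : seq gT) (a b : nat) : Prop :=
  [/\ listing G rs, listing G cs, 0 < a /\ 0 < b,
      a %| #|G| /\ b %| #|G| &
      forall (I : 'I_(#|G| %/ a)) (J : 'I_(#|G| %/ b)) (x : gT), x \in G ->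
        #|[set p : 'I_a * 'I_b |
            ct_entry rs cs (I * a + p.1) (J * b + p.2) == x]| = 1%N].

(* Pandiagonal magic Cayley-sudoku table with square k x k blocks: every
   row, column, broken diagonal (positions (l, l+j)) and broken
   antidiagonal (positions (l, j-l)), indices mod k, of each block has
   product (= sum, additively) equal to the identity. *)
Definition pandiagonal_magic_cs (G : {set gT}) (rs cs : seq gT) (k : nat) : Prop :=
  cayley_sudoku G rs cs k k /\
  forall (I J : 'I_(#|G| %/ k)),
    let e (i j : nat) := ct_entry rs cs (I * k + i) (J * k + j) in
    [/\ forall i : 'I_k, \prod_(j < k) e i j = 1,
        forall j : 'I_k, \prod_(i < k) e i j = 1,
        forall j : 'I_k, \prod_(l < k) e l ((l + j) %% k) = 1 &
        forall j : 'I_k, \prod_(l < k) e l ((j + k - l) %% k) = 1].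

Definition has_pmcs_table (G : {set gT}) : Prop :=
  exists (rs cs : seq gT) (k : nat), pandiagonal_magic_cs G rs cs k.

End CayleySudoku.

(* In an abelian group, the row and column conditions on a single k x k block
   of a pandiagonal magic Cayley-sudoku table already force all elements to
   have the same k-th power, so |G| = k^2 and exp(G) divides k; this rules out
   Z_9, where k = 3.  For Z_2 x Z_2 the blocks are 2 x 2, and the two entries of
   a row with product 1 are mutually inverse, hence equal since every element
   is an involution.  The product conditions (3) and (4) hold for Z_9 because
   N and G/N are abelian of odd order. *)

From mathcomp Require Import all_boot all_fingroup all_algebra all_solvable.

Set Implicit Arguments.
Unset Strict Implicit.
Unset Printing Implicit Defensive.

Local Open Scope group_scope.

Section CommutingProducts.
Variable gT : finGroupType.

Lemma perm_prodg_commute (s1 s2 : seq gT) :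
  {in s1 &, forall x y, commute x y} -> perm_eq s1 s2 ->
  \prod_(x <- s1) x = \prod_(x <- s2) x.
Proof.
elim: s1 s2 => [|x s1 IHs] s2 cs1 eq12.
  by case: s2 eq12 => // y s2 /perm_size.
have : x \in s2 by rewrite -(perm_mem eq12) mem_head.
move: eq12 => /[swap] /splitPr[l r] eq12; have eq1lr : perm_eq s1 (l ++ r).
  by rewrite -(perm_cons x) (permPl eq12) -cat1s perm_catCA.
have ls1 y : y \in l -> y \in x :: s1 by rewrite (perm_mem eq12) mem_cat => ->.
rewrite big_cons (IHs _ _ eq1lr) => [|y z ys zs]; last first.
  by apply: cs1; rewrite inE (ys, zs) orbT.
rewrite !big_cat big_cons /= !mulgA; congr (_ * _); rewrite big_seq.
by apply: commute_prod => y ly; apply: cs1; rewrite ?mem_head ?ls1.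
Qed.

(* Reindexing by x |-> x^-1 gives P = P^-1, so #[P] divides both 2 and #|H|. *)
Lemma prod_abelian_odd (H : {group gT}) :
  abelian H -> odd #|H| -> \prod_(x in H) x = 1.
Proof.
move=> cHH oddH; rewrite -big_filter; set s := filter _ _; set P := \prod_(x <- s) x.
have sH y : (y \in s) = (y \in H) by rewrite mem_filter mem_index_enum andbT.
have cH : {in s &, forall x y, commute x y}.
  by move=> x y; rewrite !sH => xH yH; apply: (centsP cHH).
have PV : P^-1 = P.
  rewrite -[P in P^-1](@perm_prodg_commute (rev s)); last 2 first.
  - by move=> x y; rewrite !mem_rev; apply: cH.
  - by rewrite perm_rev.
  rewrite -prodgV -(big_map (fun x => x^-1) xpredT id); apply: perm_prodg_commute.
    move=> _ _ /mapP[x xH ->] /mapP[y yH ->].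
    by apply/commuteV/commute_sym/commuteV/cH.
  have s_uniq : uniq s by rewrite filter_uniq ?index_enum_uniq.
  apply: uniq_perm; rewrite ?(map_inj_uniq invg_inj) //.
  by move=> y; rewrite -{1}[y]invgK (mem_map invg_inj) !sH groupV.
have PH : P \in H by rewrite /P big_seq group_prod // => x; rewrite sH.
apply/eqP; rewrite -order_eq1 -dvdn1 -(eqnP (_ : coprime 2 #|H|)) ?coprime2n //.
by rewrite dvdn_gcd (order_dvdG PH) andbT order_dvdn expg2 -{1}PV mulVg.
Qed.

End CommutingProducts.

Section CayleySudokuBlock.
Variables (gT : finGroupType) (rs cs : seq gT) (k : nat).
Hypothesis csT : cayley_sudoku [set: gT] rs cs k k.

Lemma cayley_sudoku_blocks_gt0 : 0 < #|[set: gT]| %/ k.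
Proof.
case: csT => _ _ [k_gt0 _] [kG _] _.
by rewrite divn_gt0 // dvdn_leq // cardsT; apply/card_gt0P; exists 1.
Qed.

Lemma cayley_sudoku_first_block_bij :
  bijective (fun p : 'I_k * 'I_k => ct_entry rs cs p.1 p.2).
Proof.
set f := fun p : 'I_k * 'I_k => _.
have [_ _ _ _ blocks] := csT; pose I0 := Ordinal cayley_sudoku_blocks_gt0.
have /= f1 := blocks I0 I0.
have f_inj : injective f.
  move=> p q fpq; have /eqP/cards1P[z fz] := f1 (f p) (in_setT _).
  have : p \in [set z] by rewrite -fz inE.
  have : q \in [set z] by rewrite -fz inE fpq.
  by rewrite !inE => /eqP-> /eqP->.
suff : #|gT| <= #|codom f| by rewrite card_codom //; apply: inj_card_bij.
apply/subset_leq_card/subsetP => x _.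
have /eqP/cards1P[p fp] := f1 x (in_setT x).
by have := set11 p; rewrite -fp inE => /eqP <-; apply: codom_f.
Qed.

Lemma cayley_sudoku_card : #|gT| = (k ^ 2)%N.
Proof.
by rewrite -(bij_eq_card cayley_sudoku_first_block_bij) card_prod card_ord.
Qed.

End CayleySudokuBlock.

Section AbelianMagic.
Variables (gT : finGroupType) (rs cs : seq gT) (k : nat).
Hypothesis cTT : abelian [set: gT].

(* Row i of the first block gives r_i^k = C^-1 and column j gives c_j^k = R^-1,
   where R and C are the products of its row and column labels; every element
   occurs in the block as some r_i c_j, so its k-th power is C^-1 R^-1. *)
Lemma pandiagonal_magic_cs_exponent :
  pandiagonal_magic_cs [set: gT] rs cs k -> exponent [set: gT] %| k.
Proof.
case=> csT magic; have cT x y : commute x y := centsP cTT x (in_setT x) y (in_setT y).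
have [g fK gK] := cayley_sudoku_first_block_bij csT.
pose I0 := Ordinal (cayley_sudoku_blocks_gt0 csT).
have /= [rows cols _ _] := magic I0 I0.
set r := fun i => nth 1 rs i; set c := fun j => nth 1 cs j.
set R := \prod_(i < k) r i; set C := \prod_(j < k) c j.
have rowX (i : 'I_k) : r i ^+ k = C^-1.
  have : \prod_(j < k) (r i * c j) = 1 := rows i.
  by rewrite prodgMl_commute // card_ord => /eqP; rewrite mulg_eq1 => /eqP.
have colX (j : 'I_k) : c j ^+ k = R^-1.
  have : \prod_(i < k) (r i * c j) = 1 := cols j.
  by rewrite prodgMr_commute // card_ord => /eqP; rewrite -eq_invg_mul eq_sym => /eqP.
have entryX (p : 'I_k * 'I_k) : ct_entry rs cs p.1 p.2 ^+ k = C^-1 * R^-1.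
  by rewrite expgMn // rowX colX.
apply/exponentP => x _.
by rewrite -[x]gK entryX -(entryX (g 1)) gK expg1n.
Qed.

End AbelianMagic.

Lemma has_pmcs_table_exponent (gT : finGroupType) :
    abelian [set: gT] -> has_pmcs_table [set: gT] ->
  exists2 k, #|gT| = (k ^ 2)%N & exponent [set: gT] %| k.
Proof.
move=> cTT [rs [cs [k pm]]]; exists k; last exact: pandiagonal_magic_cs_exponent pm.
exact: cayley_sudoku_card pm.1.
Qed.

Lemma exponent2_no_pmcs_table (gT : finGroupType) :
  exponent [set: gT] %| 2 -> #|gT| = 4 -> ~ has_pmcs_table [set: gT].
Proof.
move=> expT2 cardT [rs [cs [k [csT magic]]]].
have k2 : k = 2 by apply/eqP; rewrite -eqn_sqr -(cayley_sudoku_card csT) cardT.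
subst k; have f_inj := bij_inj (cayley_sudoku_first_block_bij csT).
pose I0 := Ordinal (cayley_sudoku_blocks_gt0 csT); have [rows _ _ _] := magic I0 I0.
have e01 : ct_entry rs cs 0 0 * ct_entry rs cs 0 1%N = 1.
  by rewrite -[RHS](rows ord0) !big_ord_recl big_ord0 mulg1.
have e00V : (ct_entry rs cs 0 0)^-1 = ct_entry rs cs 0 0.
  by apply/eqP; rewrite eq_invg_mul -expg2; apply/eqP/(exponentP expT2)/in_setT.
have e01E : ct_entry rs cs 0 0 = ct_entry rs cs 0 1%N.
  by apply/eqP; rewrite -{1}e00V eq_invg_mul e01.
have := f_inj (ord0, ord0) (ord0, ord_max) e01E.
by move/(congr1 (fun p : 'I_2 * 'I_2 => val p.2)).
Qed.

Lemma exponent_Z2xZ2 : exponent [set: 'Z_2 * 'Z_2] %| 2.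
Proof.
have sq (y : 'Z_2) : y * y = 1.
  by have := expg_cardG (in_setT y); rewrite cardsT card_ord.
by apply/exponentP => -[a b] _; apply: (congr2 pair (sq a) (sq b)).
Qed.

Theorem lemma4p4 :
  (let G := [set: 'Z_9] in
   let N := <[(3%:R : 'Z_9)%R]> in
   [/\ #|G| = (3 ^ 2)%N,
       N \subset G /\ #|N| = 3%N,
       \prod_(x in N) x = 1 /\ \prod_(C in G / N) C = 1,
       ~~ (exponent G %| 3)%N &
       ~ has_pmcs_table G])
  /\
  (let G := [set: 'Z_2 * 'Z_2] in
   [/\ #|G| = (2 ^ 2)%N,
       (exponent G %| 2)%N &
       ~ has_pmcs_table G]).
Proof.
split=> G; last first.
  split; rewrite ?cardsT ?card_prod ?card_ord ?exponent_Z2xZ2 //.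
  by apply: exponent2_no_pmcs_table; rewrite ?exponent_Z2xZ2 ?card_prod ?card_ord.
move=> N; have N3 : #|N| = 3.
  have -> : N = <[Zp1 ^+ 3]> by congr cycle; apply: val_inj.
  by rewrite -/(order _) orderXgcd order_Zp1.
have GN3 : #|G / N| = 3.
  rewrite card_quotient ?sub_abelian_norm ?subsetT ?Zp_abelian //.
  by rewrite -divgS ?subsetT // N3 cardsT card_ord.
have notexp3 : ~~ (exponent G %| 3).
  by apply/negP => /(dvdn_trans (dvdn_exponent (in_setT Zp1))); rewrite order_Zp1.
split; rewrite ?subsetT ?cardsT ?card_ord //.
  split; first by rewrite prod_abelian_odd ?cycle_abelian ?N3.
  rewrite (prod_abelian_odd (H := [group of G / N])) ?GN3 //.
  by rewrite quotient_abelian ?Zp_abelian.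
case/has_pmcs_table_exponent; first exact: Zp_abelian.
move=> k; rewrite card_ord => /esym/eqP; rewrite (eqn_sqr k 3) => /eqP->.
by apply/negP.
Qed.
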